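(* Let $d\ge 1$ be fixed, let $p_1,\ldots,p_d$ be fixed (not necessarily distinct) primes, and for $k\ge 1$ let $\Gamma\cong\prod_{i=1}^d \mathbb{Z}_{p_i^k}$. Then, as $k\to\infty$, \[\Pr_{1/2}(\Gamma)\le k^d\exp\left[\left(\frac{(d+1)!\prod_{i=1}^d\lg p_i}{2}\,\lg k\right)^{\frac{1}{d+1}}-\left(\frac{d}{d+1}\right)\lg\lg k+O(1)\right],\] where the $O(1)$ term is bounded by a constant independent of $k$.
   Context: For a finite additive group $\Gamma$, a sequence $S=(g_1,\ldots,g_t)$ of elements of $\Gamma$ is a zero-sum sequence if $g_1+\cdots+g_t=0_\Gamma$. The cross number of $S$ is $\sum_{i=1}^t 1/|g_i|$, where $|g_i|$ is the order of $g_i$ in $\Gamma$. A sequence $S$ is called good if it contains a zero-sum subsequence whose cross number is at most $1$. A random sequence of length $t$ is a sequence $(a_1,\ldots,a_t)$ chosen with equal probability among all length-$t$ sequences of elements of $\Gamma$; let $\mathbb{E}_\Gamma(t)$ be the event that it is good. Define $\Pr_{1/2}(\Gamma)=\min\{t:\Pr[\mathbb{E}_\Gamma(t)]\ge 1/2\}$. Here $\lg$ denotes the base-2 logarithm and $\exp$ the natural exponential. *)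

From HB Require Import structures.
From mathcomp Require Import all_boot all_order all_algebra all_fingroup.
From mathcomp Require Import reals sequences exp.
From mathcomp Require Import cyclic zify.
Set Implicit Arguments. Unset Strict Implicit. Unset Printing Implicit Defensive.
Import Order.TTheory GRing.Theory Num.Theory.

HB.instance Definition _ (A B : finZmodType) := GRing.Zmodule.on (A * B)%type.

(* prodZ n [:: m1; ...; mr] = Z_n x Z_m1 x ... x Z_mr (moduli assumed >= 2). *)
Fixpoint prodZ (n : nat) (s : seq nat) : finZmodType :=
  match s with
  | [::] => 'Z_n
  | m :: s' => ('Z_n * prodZ m s')%type : finZmodType
  end.

Definition Gamma (p : nat) (ps : seq nat) (k : nat) : finZmodType :=
  prodZ (p ^ k) (map (fun q => q ^ k) ps).

Section Good.
Variable G : finZmodType.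
Local Open Scope ring_scope.

(* A sequence of length t is a map 'I_t -> G; subsequences are index sets.
   #[g]%g is the order of g in the (additive) group G. *)
Definition cross_number (t : nat) (a : {ffun 'I_t -> G}) (I : {set 'I_t}) : rat :=
  \sum_(i in I) (#[a i]%g%:R)^-1.

Definition good (t : nat) (a : {ffun 'I_t -> G}) : bool :=
  [exists I : {set 'I_t},
     [&& I != set0, \sum_(i in I) a i == 0 & cross_number a I <= 1]].

Definition prob_good (t : nat) : rat :=
  #|[set a : {ffun 'I_t -> G} | good a]|%:R / #|{ffun 'I_t -> G}|%:R.

Definition half_pred : pred nat := fun t => (1 / 2 <= prob_good t).

Lemma good_large (t : nat) (a : {ffun 'I_t -> G}) : (#|G| * #|G| <= t)%N -> good a.
Proof.
move=> Htl.
have G0 : (0 < #|G|)%N by apply/card_gt0P; exists 0.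
have [g Hg] : exists g : G, (#|G| <= #|[set i | a i == g]|)%N.
  apply/existsP; apply/negP => /existsP Hn.
  have Hlt : forall g : G, (#|[set i | a i == g]| <= #|G|.-1)%N.
    move=> g; rewrite -ltnS prednK // ltnNge; apply/negP => H; apply: Hn.
    by exists g.
  have Ht : (\sum_(g : G) #|[set i | a i == g]| = #|'I_t|)%N.
    rewrite -sum1_card (partition_big (fun i => a i) predT) //=.
    by apply: eq_bigr => g _; rewrite -sum1_card; apply: eq_bigl => i; rewrite inE.
  rewrite card_ord in Ht.
  have H2 : (\sum_(g : G) #|[set i | a i == g]| <= \sum_(g : G) #|G|.-1)%N.
    by apply: leq_sum => g _; exact: Hlt g.
  rewrite Ht sum_nat_const in H2.
  have HT : #|[pred g : G | true]| = #|G| by apply: eq_card.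
  rewrite HT in H2; move: H2 Htl G0; case: #|G| => // n H2 Htl _; nia.
set S := [set i | a i == g] in Hg.
set o := #[g]%g.
have o0 : (0 < o)%N by apply: order_gt0.
have oG : (o <= #|G|)%N.
  by apply: dvdn_leq => //; rewrite -cardsT; apply: order_dvdG; rewrite inE.
pose I := [set i in take o (enum S)].
have cI : #|I| = o.
  have u : uniq (take o (enum S)) by rewrite take_uniq // enum_uniq.
  rewrite cardsE (card_uniqP u) size_take -cardE.
  by case: ltngtP => //; lia.
have IS : forall i, i \in I -> a i = g.
  move=> i; rewrite inE => /mem_take; rewrite mem_enum inE.
  by move/eqP.
apply/existsP; exists I; apply/and3P; split.
- by apply/set0Pn/card_gt0P; rewrite cI.
- rewrite (eq_bigr (fun _ => g)) // sumr_const cI -FinRing.zmodXgE.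
  by rewrite /o expg_order.
- rewrite /cross_number (eq_bigr (fun _ => (o%:R)^-1)); last by move=> i /IS ->.
  by rewrite sumr_const cI -[_ *+ o]mulr_natl mulfV // pnatr_eq0 -lt0n.
Qed.

Lemma half_pred_ex : exists t, half_pred t.
Proof.
exists (#|G| * #|G|)%N; rewrite /half_pred /prob_good.
have -> : [set a : {ffun 'I_(#|G| * #|G|) -> G} | good a] = setT.
  by apply/setP => a; rewrite !inE good_large.
rewrite cardsT divff; first by rewrite ler_pdivrMr // mul1r ler1n.
by rewrite pnatr_eq0 -lt0n; apply/card_gt0P; exists [ffun=> 0].
Qed.

Definition Pr_half : nat := ex_minn half_pred_ex.

End Good.

Definition lg {R : realType} (x : R) : R := (ln x / ln 2)%R.

From HB Require Import structures.
From mathcomp Require Import all_boot all_order all_algebra all_fingroup.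
From mathcomp Require Import reals sequences exp.
From mathcomp Require Import cyclic ring lra zify.
Import Order.TTheory GRing.Theory Num.Theory.

Set Implicit Arguments. Unset Strict Implicit. Unset Printing Implicit Defensive.
Local Open Scope ring_scope.

(* A uniformly random sequence of length t in a finite abelian group G has on
   average (2^t - 1)/|G| nonempty zero-sum subsequences, and the subsums over
   two distinct nonempty index sets are independent and uniform, so Chebyshev's
   inequality bounds the probability of having no nonempty zero-sum subsequence
   by |G|/(2^t - 1). If moreover every term has order at least t, a zero-sum
   subsequence has cross number at most 1. In Gamma = prod_i Z_(p_i^k) the order
   of an element is at least that of its Z_(p_1^k)-component, which is below
   p_1^(k/2) with probability at most p_1^(-k/2); so t = (prod_i p_i) k + 3 works
   for large k. Hence Pr_1/2(Gamma) = O(k), which is below the stated bound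
   because k <= k^d and (c lg k)^(1/(d+1)) outgrows lg lg k. *)

Section AdditiveFibers.
Variables (A B : finZmodType) (f : A -> B).
Hypothesis fD : {morph f : x y / x + y}.

Lemma morph0 : f 0 = 0.
Proof. by apply: (addrI (f 0)); rewrite -fD !addr0. Qed.

Lemma morphN x : f (- x) = - f x.
Proof. by apply: (addrI (f x)); rewrite -fD !subrr morph0. Qed.

Lemma morphMn x n : f (x *+ n) = f x *+ n.
Proof. by elim: n => [|n IH]; rewrite ?morph0 // !mulrS fD IH. Qed.

Lemma order_morph_dvdn x : (#[f x]%g %| #[x]%g)%N.
Proof.
by rewrite order_dvdn FinRing.zmodXgE -morphMn -FinRing.zmodXgE expg_order morph0.
Qed.

Hypothesis f_surj : forall b, exists x, f x = b.

Lemma card_fiber b : (#|[set x | f x == b]| * #|B| = #|A|)%N.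
Proof.
have fiber_translate c : #|[set x | f x == c]| = #|[set x | f x == 0]|.
  have [u <-] := f_surj c.
  rewrite -(card_imset [set x | f x == 0] (addIr u)); apply: eq_card => y; rewrite inE.
  apply/eqP/imsetP => [fy|[x]]; last by rewrite inE => /eqP fx ->; rewrite fD fx add0r.
  by exists (y - u); rewrite ?subrK // inE fD morphN fy subrr.
rewrite -[#|A|]sum1_card (partition_big f predT) //=.
rewrite (eq_bigr (fun _ => #|[set x | f x == b]|)) => [|c _].
  by rewrite sum_nat_const mulnC.
rewrite (fiber_translate b) -(fiber_translate c) -sum1_card.
by apply: eq_bigl => x; rewrite inE.
Qed.

Lemma card_preimset (S : {pred B}) :
  (#|[set x | f x \in S]| * #|B| = #|S| * #|A|)%N.
Proof.
rewrite -sum1_card (partition_big f (mem S)) => [|x]; last by rewrite inE.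
rewrite big_distrl -(sum1_card S) big_distrl; apply: eq_bigr => b Sb /=.
rewrite mul1n -(card_fiber b) -sum1_card; congr (_ * _)%N.
by apply: eq_bigl => x; rewrite !inE andb_idl // => /eqP->.
Qed.

End AdditiveFibers.

HB.instance Definition _ (G : finZmodType) (t : nat) :=
  GRing.Zmodule.on {ffun 'I_t -> G}.

Lemma leq_card_bigcup (I T : finType) (A : I -> {set T}) :
  (#|\bigcup_i A i| <= \sum_i #|A i|)%N.
Proof.
elim/big_rec2: _ => [|i n B _ IH]; first by rewrite cards0.
by apply: leq_trans (leq_card_setU (A i) B).1 _; rewrite leq_add2l.
Qed.

Section Subsums.
Variables (G : finZmodType) (t : nat).
Local Notation seqG := {ffun 'I_t -> G}.

Lemma card_coord_preimset (S : {pred G}) (i : 'I_t) :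
  (#|[set a : seqG | a i \in S]| * #|G| = #|S| * #|G| ^ t)%N.
Proof.
have coordD : {morph (fun a : seqG => a i) : a b / a + b} by move=> a b; rewrite ffunE.
have coord_surj g : exists a : seqG, a i = g by exists [ffun=> g]; rewrite ffunE.
by rewrite (card_preimset coordD coord_surj) card_ffun card_ord.
Qed.

Lemma card_exists_coord (S : {pred G}) P : (#|S| * P <= #|G|)%N ->
  (#|[set a : seqG | [exists i, a i \in S]]| * P <= t * #|G| ^ t)%N.
Proof.
move=> S_small; have G_gt0 : (0 < #|G|)%N by apply/card_gt0P; exists 0.
have -> : [set a : seqG | [exists i, a i \in S]] = \bigcup_i [set a : seqG | a i \in S].
  apply/setP => a; rewrite inE.
  by apply/existsP/bigcupP => [[i Sai]|[i _]]; [exists i; rewrite ?inE|rewrite inE; exists i].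
have := leq_card_bigcup (fun i => [set a : seqG | a i \in S]).
move=> /leq_mul/(_ (leqnn P))/leq_trans; apply.
rewrite big_distrl -[t in (t * _)%N]card_ord -sum_nat_const.
apply: leq_sum => i _; rewrite /= -(leq_pmul2r G_gt0) mulnAC card_coord_preimset.
by rewrite mulnAC mulnC leq_mul2l S_small orbT.
Qed.

Definition subsum (I : {set 'I_t}) (a : seqG) : G := \sum_(i in I) a i.

Lemma subsumD I : {morph subsum I : a b / a + b}.
Proof. by move=> a b; rewrite /subsum -big_split; apply: eq_bigr => i _; rewrite ffunE. Qed.

Definition delta (x : 'I_t) (g : G) : seqG := [ffun i => if i == x then g else 0].

Lemma subsum_delta I x g : subsum I (delta x g) = if x \in I then g else 0.
Proof.
rewrite /subsum; case: ifP => Ix.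
  rewrite (bigD1 x) //= ffunE eqxx big1 ?addr0 // => i /andP[_ /negbTE xi].
  by rewrite ffunE xi.
by rewrite big1 // => i Ii; rewrite ffunE; case: eqP => // ix; rewrite -ix Ii in Ix.
Qed.

Lemma card_subsum_eq0 I : I != set0 ->
  (#|[set a : seqG | subsum I a == 0%R]| * #|G| = #|G| ^ t)%N.
Proof.
case/set0Pn => x Ix.
have subsum_surj g : exists a, subsum I a = g by exists (delta x g); rewrite subsum_delta Ix.
by rewrite (card_fiber (subsumD I) subsum_surj) card_ffun card_ord.
Qed.

Lemma card_subsum2_eq0 I J : I != set0 -> J != set0 -> I != J ->
  (#|[set a : seqG | (subsum I a == 0%R) && (subsum J a == 0%R)]| * (#|G| * #|G|)
     = #|G| ^ t)%N.
Proof.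
wlog [x Ix xJ] : I J / exists2 x, x \in I & x \notin J.
  move=> wlog I0 J0 IJ.
  have [IsubJ|/subsetPn[x Ix xJ]] := boolP (I \subset J); last by apply: wlog => //; exists x.
  have /subsetPn[x Jx xI] : ~~ (J \subset I).
    by apply: contra IJ => JsubI; rewrite eqEsubset IsubJ.
  have JI : J != I by rewrite eq_sym.
  rewrite -(wlog J I _ J0 I0 JI); last by exists x.
  by congr (_ * _)%N; apply: eq_card => a; rewrite !inE andbC.
move=> _ /set0Pn[y Jy] _.
pose f a := (subsum I a, subsum J a) : G * G.
have fD : {morph f : a b / a + b} by move=> a b; rewrite /f !subsumD.
have f_surj gh : exists a, f a = gh.
  case: gh => g h; exists (delta x (g - (if y \in I then h else 0)) + delta y h).
  rewrite /f !subsumD !subsum_delta Ix Jy (negbTE xJ) add0r; congr pair.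
  by case: ifP; rewrite ?subr0 ?addr0 ?subrK.
by have := card_fiber fD f_surj 0; rewrite card_ffun card_ord card_prod => <-.
Qed.
End Subsums.

Lemma card_eq0_second_moment (T : finType) (R : realFieldType) (X : T -> R) :
  #|[set a | X a == 0]|%:R * (\sum_a X a) ^+ 2
    <= #|T|%:R * (#|T|%:R * \sum_a X a ^+ 2 - (\sum_a X a) ^+ 2).
Proof.
set N : R := #|T|%:R; set S := \sum_a X a.
have deviation : \sum_a (N * X a - S) ^+ 2 = N * (N * \sum_a X a ^+ 2 - S ^+ 2).
  rewrite (eq_bigr (fun a => N ^+ 2 * X a ^+ 2 - 2 * N * S * X a + S ^+ 2)); last first.
    by move=> a _; ring.
  rewrite big_split sumrB /= -!mulr_sumr -/S sumr_const -mulr_natl; ring.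
rewrite -deviation (bigID [pred a | X a == 0%R]) /= -[leLHS]addr0.
apply: lerD; last by apply: sumr_ge0 => a _; exact: sqr_ge0.
rewrite (eq_bigr (fun _ => S ^+ 2)) => [|a /eqP->]; last by rewrite mulr0 sub0r sqrrN.
rewrite sumr_const mulr_natl le_eqVlt; apply/orP; left; apply/eqP.
by congr (_ *+ _); apply: eq_card => a; rewrite inE.
Qed.

Lemma sumr_indicator (T : finType) (P : pred T) :
  \sum_a ((P a)%:R : rat) = #|[set a | P a]|%:R.
Proof.
rewrite -sum1_card natr_sum [RHS]big_mkcond; apply: eq_bigr => a _.
by rewrite inE; case: (P a).
Qed.

Section ZeroSubsumMoments.
Variables (G : finZmodType) (t : nat).
Local Notation seqG := {ffun 'I_t -> G}.
Local Notation n := (#|G|%:R : rat).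
Local Notation N := ((#|G| ^ t)%N%:R : rat).
Local Notation M := ((2 ^ t - 1)%N%:R : rat).

Definition zero_subsums (a : seqG) : rat :=
  \sum_(I : {set 'I_t} | I != set0) (subsum I a == 0)%:R.

Lemma sum_nonempty_sets : \sum_(I : {set 'I_t} | I != set0) (1 : rat) = M.
Proof.
have := card_powerset [set: 'I_t]; rewrite powersetT !cardsT card_ord => card_sets.
by rewrite (eq_bigl (mem (predC1 set0))) // sumr_const cardC1 card_sets subn1.
Qed.

Lemma sum_zero_subsums : (\sum_a zero_subsums a) * n = M * N.
Proof.
rewrite exchange_big /= mulr_suml -sum_nonempty_sets mulr_suml.
apply: eq_bigr => I I0; rewrite sumr_indicator -natrM card_subsum_eq0 //.
by rewrite mul1r.
Qed.

Lemma sum_zero_subsums_sqr :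
  (\sum_a zero_subsums a ^+ 2) * n ^+ 2 = M * (N * n + (M - 1) * N).
Proof.
under eq_bigr => a _ do rewrite expr2 /zero_subsums big_distrlr /=.
rewrite exchange_big /= mulr_suml -sum_nonempty_sets mulr_suml.
apply: eq_bigr => I I0; rewrite mul1r exchange_big /= (bigD1 I) //= mulrDl.
congr (_ + _).
  under eq_bigr => a _ do rewrite -natrM mulnb andbb.
  by rewrite sumr_indicator expr2 mulrA -natrM card_subsum_eq0.
rewrite [in RHS](bigD1 I) //= addrC addrK !mulr_suml; apply: eq_bigr => J /andP[J0 JI].
under eq_bigr => a _ do rewrite -natrM mulnb.
by rewrite mul1r sumr_indicator expr2 -!natrM card_subsum2_eq0 // eq_sym.
Qed.

Lemma card_no_zero_subsum :
  (#|[set a : seqG | zero_subsums a == 0%R]| * (2 ^ t - 1) <= #|G| ^ t * #|G|)%N.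
Proof.
rewrite -(ler_nat rat) !natrM; set z := #|_|%:R.
have [->|M0] := eqVneq M 0; first by rewrite mulr0 mulr_ge0.
have n0 : 0 < n by rewrite ltr0n; apply/card_gt0P; exists 0.
have {M0}M0 : 0 < M by rewrite lt0r M0 ler0n.
have N0 : 0 < N by rewrite natrX exprn_gt0.
set S := \sum_a zero_subsums a; set Q := \sum_a zero_subsums a ^+ 2.
have cheb : z * (S * n) ^+ 2 <= N * (N * (Q * n ^+ 2) - (S * n) ^+ 2).
  have := card_eq0_second_moment zero_subsums; rewrite card_ffun card_ord natrX -/z.
  move=> /(ler_wpM2r (sqr_ge0 n)); rewrite -natrX.
  have -> : z * (S * n) ^+ 2 = z * S ^+ 2 * n ^+ 2 by ring.
  by have -> : N * (N * (Q * n ^+ 2) - (S * n) ^+ 2) = N * (N * Q - S ^+ 2) * n ^+ 2 by ring.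
rewrite sum_zero_subsums sum_zero_subsums_sqr in cheb.
rewrite -(ler_pM2r (_ : 0 < M * N ^+ 2)) ?mulr_gt0 ?exprn_gt0 //.
rewrite (_ : _ * _ * _ = z * (M * N) ^+ 2); last by ring.
apply: (le_trans cheb); rewrite -subr_ge0.
by rewrite (_ : _ - _ = N ^+ 3 * M) ?mulr_ge0 ?exprn_ge0 ?ltW //; ring.
Qed.
End ZeroSubsumMoments.

Section GoodSequences.
Variables (G : finZmodType) (t : nat).
Local Notation seqG := {ffun 'I_t -> G}.

Lemma good_of_zero_subsum (a : seqG) :
  (forall i, t <= #[a i]%g)%N -> zero_subsums a != 0 -> good a.
Proof.
move=> large_orders; rewrite psumr_eq0 => [|I _]; last exact: ler0n.
case/allPn => I _; rewrite negb_imply pnatr_eq0 eqb0 negbK => /andP[I0 sumI0].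
apply/existsP; exists I; rewrite I0 sumI0 /cross_number /=.
have /set0Pn[x _] := I0.
have t0 : (0 < t)%N := leq_ltn_trans (leq0n x) (ltn_ord x).
apply: (le_trans (y := \sum_(i in I) t%:R^-1)).
  by apply: ler_sum => i _; rewrite lef_pV2 ?ler_nat ?posrE ?ltr0n ?order_gt0.
rewrite sumr_const -[_ *+ #|I|]mulr_natl ler_pdivrMr ?ltr0n // mul1r ler_nat.
by have := max_card (mem I); rewrite card_ord.
Qed.

Lemma prob_good_ge_half :
  (4 * #|G| < 2 ^ t)%N ->
  (4 * #|[set a : seqG | [exists i, #[a i]%g < t]]| <= #|G| ^ t)%N ->
  1 / 2 <= prob_good G t.
Proof.
set B := [set a | _]; set Z := [set a : seqG | zero_subsums a == 0] => G_small B_small.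
have G0 : (0 < #|G|)%N by apply/card_gt0P; exists 0.
have Z_small : (4 * #|Z| <= #|G| ^ t)%N.
  rewrite -(leq_pmul2r G0); apply: leq_trans (card_no_zero_subsum G t).
  by rewrite -/Z -mulnA mulnCA leq_mul2l -ltnS subn1 prednK ?expn_gt0 // G_small orbT.
set gd := [set a : seqG | good a].
have bad_sub : ~: gd \subset B :|: Z.
  apply/subsetP => a; rewrite !inE; apply: contraR; rewrite negb_or => /andP[aB aZ].
  apply: good_of_zero_subsum aZ => i; rewrite leqNgt.
  by apply: contra aB => ?; apply/existsP; exists i.
have := cardsC gd; rewrite card_ffun card_ord => card_eq.
have := leq_trans (subset_leq_card bad_sub) (leq_card_setU B Z).1 => bad_le.
(* [card_ffun] produces an instance of [#|G|] that [lia] does not identify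
   with the one in [B_small]; [set] merges them. *)
have half : (#|G| ^ t <= 2 * #|gd|)%N.
  by move: card_eq B_small Z_small; set n := #|G|; lia.
rewrite /prob_good card_ffun card_ord ler_pdivlMr ?ltr0n ?expn_gt0 ?G0 //.
by move: half; rewrite -(ler_nat rat) natrM; lra.
Qed.
End GoodSequences.

Lemma Pr_half_le (G : finZmodType) t : 1 / 2 <= prob_good G t -> (Pr_half G <= t)%N.
Proof. by rewrite /Pr_half; case: ex_minnP => m _; apply. Qed.

Definition proj_Gamma p ps k : Gamma p ps k -> 'Z_(p ^ k) :=
  match ps return Gamma p ps k -> 'Z_(p ^ k) with
  | [::] => id
  | _ :: _ => fst
  end.

Lemma proj_GammaD p ps k : {morph @proj_Gamma p ps k : x y / x + y}.
Proof. by case: ps. Qed.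

Lemma proj_Gamma_surj p ps k (y : 'Z_(p ^ k)) : exists x, proj_Gamma (ps := ps) x = y.
Proof. by case: ps => [|q ps]; [exists y | exists (y, 0)]. Qed.

Section PrimePowerModulus.
Variables (p k : nat).
Hypotheses (p_pr : prime p) (k_gt0 : (0 < k)%N).

Lemma Zp_prime_power : (Zp_trunc (p ^ k)).+2 = (p ^ k)%N.
Proof. by rewrite Zp_cast // -(expn0 p) ltn_exp2l ?prime_gt1. Qed.

Lemma Zp_prime_power_lt (y : 'Z_(p ^ k)) : (y < p ^ k)%N.
Proof. by rewrite -[X in (_ < X)%N]Zp_prime_power ltn_ord. Qed.

Lemma card_Zp_prime_power : #|'Z_(p ^ k)| = (p ^ k)%N.
Proof. by rewrite card_ord Zp_prime_power. Qed.

Lemma Zp_order_ge j (y : 'Z_(p ^ k)) : (j <= k)%N ->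
  ~~ (p ^ j %| y)%N -> (p ^ (k - j).+1 <= #[y]%g)%N.
Proof.
move=> j_le_k p_ndvd; have p_gt0 := prime_gt0 p_pr.
have y_order_gt0 := order_gt0 y.
have y_gt0 : (0 < y)%N by rewrite lt0n; apply: contraNneq p_ndvd => ->; rewrite dvdn0.
have : (p ^ k %| y * #[y]%g)%N.
  have := expg_order y; rewrite FinRing.zmodXgE Zp_mulrn => /(congr1 val) /=.
  by rewrite [X in (_ %% X)%N]Zp_prime_power => /eqP.
rewrite pfactor_dvdn ?muln_gt0 ?y_gt0 // lognM // => k_le.
move: p_ndvd; rewrite pfactor_dvdn // -ltnNge => lt_j.
by apply: dvdn_leq => //; rewrite pfactor_dvdn //; lia.
Qed.

Lemma card_Zp_multiples j : (j <= k)%N ->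
  (#|[set y : 'Z_(p ^ k) | p ^ j %| y]| <= p ^ (k - j))%N.
Proof.
move=> j_le_k; have p_gt0 := prime_gt0 p_pr.
pose mul_pj (i : 'I_(p ^ (k - j))) : 'Z_(p ^ k) := inZp (i * p ^ j).
apply: leq_trans (_ : #|[set mul_pj i | i in 'I_(p ^ (k - j))]| <= _)%N; last first.
  by rewrite (leq_trans (leq_imset_card _ _)) // card_ord.
apply/subset_leq_card/subsetP => y; rewrite inE => pj_dvd.
have y_lt : (y %/ p ^ j < p ^ (k - j))%N.
  by rewrite ltn_divLR ?expn_gt0 ?p_gt0 // -expnD subnK // Zp_prime_power_lt.
apply/imsetP; exists (Ordinal y_lt) => //; apply: val_inj => /=.
by rewrite divnK // [X in (_ %% X)%N]Zp_prime_power modn_small // Zp_prime_power_lt.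
Qed.

End PrimePowerModulus.

Lemma card_Gamma p ps k : all prime (p :: ps) -> (0 < k)%N ->
  #|Gamma p ps k| = ((\prod_(q <- p :: ps) q) ^ k)%N.
Proof.
move=> primes k_gt0; elim: ps p primes => [|q ps IH] p /andP[p_pr ps_pr].
  by rewrite big_seq1 card_Zp_prime_power.
rewrite [LHS](card_prod ('Z_(p ^ k)) (Gamma q ps k)) card_Zp_prime_power //.
by rewrite IH // [in RHS]big_cons expnMn.
Qed.

Lemma card_Gamma_small_order p ps k j : prime p -> (0 < k)%N -> (j <= k)%N ->
  (#|[set g : Gamma p ps k | #[g]%g < p ^ (k - j).+1]| * p ^ j <= #|Gamma p ps k|)%N.
Proof.
move=> p_pr k_gt0 j_le_k; set S := [set y : 'Z_(p ^ k) | (p ^ j %| y)%N].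
have small_sub : [set g : Gamma p ps k | (#[g]%g < p ^ (k - j).+1)%N]
                   \subset [set g | proj_Gamma g \in S].
  apply/subsetP => g; rewrite !inE; apply: contraTT => /(Zp_order_ge p_pr k_gt0 j_le_k).
  have := dvdn_leq (order_gt0 g) (order_morph_dvdn (@proj_GammaD p ps k) g).
  by move=> proj_le /leq_trans/(_ proj_le); rewrite -leqNgt.
have := card_preimset (@proj_GammaD p ps k) (@proj_Gamma_surj p ps k) (mem S).
rewrite card_Zp_prime_power // => preim_eq.
rewrite -(@leq_pmul2r (p ^ (k - j))) ?expn_gt0 ?prime_gt0 // -mulnA -expnD subnKC //.
apply: leq_trans (leq_mul (subset_leq_card small_sub) (leqnn _)) _.
by rewrite preim_eq mulnC leq_mul2l card_Zp_multiples ?orbT.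
Qed.

Lemma sqr_le_exp2 m : (4 <= m)%N -> (m * m <= 2 ^ m)%N.
Proof.
elim: m => // m IH; rewrite leq_eqVlt => /predU1P[<- //|m_ge4].
by rewrite expnS; have := IH m_ge4; nia.
Qed.

Lemma linear_le_exp2_half Q k :
  (2 * (8 * Q + 16) <= k)%N -> (4 * (Q * k + 3) <= 2 ^ k./2)%N.
Proof.
have := odd_double_half k; rewrite -muln2; set m := k./2 => k_eq k_large.
have m_large : (8 * Q + 16 <= m)%N by case: (odd k) k_eq; lia.
have m_ge4 : (4 <= m)%N by lia.
have := sqr_le_exp2 m_ge4.
have : ((8 * Q + 16) * m <= m * m)%N by rewrite leq_mul2r m_large orbT.
have : (Q * k <= Q * (2 * m + 1))%N by rewrite leq_mul2l; case: (odd k) k_eq; lia.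
nia.
Qed.

Lemma prob_good_Gamma p ps k : all prime (p :: ps) ->
  (2 * (8 * \prod_(q <- p :: ps) q + 16) <= k)%N ->
  1 / 2 <= prob_good (Gamma p ps k) (\prod_(q <- p :: ps) q * k + 3).
Proof.
move=> primes; set Q := \prod_(q <- p :: ps) q; set t := (Q * k + 3)%N => k_large.
have p_pr : prime p by case/andP: primes.
have k_gt0 : (0 < k)%N by lia.
have := odd_double_half k; rewrite -muln2; set j := k./2 => k_eq.
have j_le : (j <= k - j)%N by case: (odd k) k_eq; lia.
have j_le_k : (j <= k)%N by lia.
have t_le_pj : (4 * t <= p ^ j)%N.
  apply: leq_trans (linear_le_exp2_half k_large) _.
  by rewrite leq_exp2r ?prime_gt1 //; case: (odd k) k_eq; lia.
apply: prob_good_ge_half.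
  rewrite card_Gamma // /t expnD expnM.
  have : (Q ^ k <= (2 ^ Q) ^ k)%N by rewrite leq_exp2r // ltnW // ltn_expl.
  by rewrite -/Q (_ : 2 ^ 3 = 8)%N //; lia.
set bad := [set a | _]; set S := [set g : Gamma p ps k | (#[g]%g < t)%N].
have S_le : (#|S| * p ^ j <= #|Gamma p ps k|)%N.
  apply: leq_trans (card_Gamma_small_order ps p_pr k_gt0 j_le_k).
  apply: leq_mul => //; apply/subset_leq_card/subsetP => g.
  rewrite !inE => /leq_trans; apply.
  apply: leq_trans (leq_pexp2l (prime_gt0 p_pr) (leq_trans j_le (leqnSn _))); lia.
have -> : bad = [set a : {ffun 'I_t -> Gamma p ps k} | [exists i, a i \in S]].
  by apply/setP => a; rewrite !inE; apply: eq_existsb => i; rewrite inE.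
have pj_gt0 : (0 < p ^ j)%N by rewrite expn_gt0 prime_gt0.
rewrite -(leq_pmul2r pj_gt0) -mulnA.
apply: leq_trans (leq_mul (leqnn 4) (card_exists_coord t S_le)) _.
by rewrite mulnA mulnC leq_mul2l t_le_pj orbT.
Qed.

Section Asymptotics.
Variable R : realType.

Lemma mul_ln_le_powR (m r x : R) : 0 < r -> 1 <= x ->
  m * ln x <= powR x r + (m / r) ^+ 2 / 2.
Proof.
move=> r_gt0 x_ge1; set w := r * ln x.
have w_ge0 : 0 <= w by apply: mulr_ge0; [exact: ltW | exact: ln_ge0].
have -> : powR x r = expR w by rewrite /powR gt_eqF ?(lt_le_trans ltr01) // mulrC.
have exp_ge : 1 + w ^+ 2 / 2 <= expR w by have := expR_ge1Dxn 1 w_ge0.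
have -> : m * ln x = m / r * w by rewrite /w mulrA divfK ?gt_eqF.
have : 0 <= (w - m / r) ^+ 2 by exact: sqr_ge0.
set u := m / r; move: exp_ge; set E := expR w => exp_ge sq.
nra.
Qed.

Lemma lg_ge1 (x : R) : 2 <= x -> 1 <= lg x.
Proof.
move=> x_ge2; have ln2_gt0 : 0 < ln (2 : R) by rewrite ln_gt0 // ltr1n.
by rewrite /lg ler_pdivlMr // mul1r ler_ln ?posrE // (lt_le_trans _ x_ge2).
Qed.

Lemma linear_le_exp_powR (d : nat) (A c a r : R) :
  (0 < d)%N -> 0 < A -> 1 <= c -> 0 <= a <= 1 -> 0 < r ->
  exists C : R, forall k : nat, (2 <= k)%N ->
    A * k%:R
      <= k%:R ^+ d * expR (powR (c * lg (k%:R : R)) r - a * lg (lg (k%:R : R)) + C).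
Proof.
move=> d_gt0 A_gt0 c_ge1 /andP[a_ge0 a_le1] r_gt0.
set b := (ln (2 : R))^-1.
exists (ln A + (b / r) ^+ 2 / 2) => k k_ge2.
have L_ge1 : 1 <= lg (k%:R : R) by rewrite lg_ge1 // ler_nat.
set L := lg (k%:R : R) in L_ge1 *.
have b_gt0 : 0 < b by rewrite invr_gt0 ln_gt0 // ltr1n.
have lgL_ge0 : 0 <= lg L by apply: divr_ge0; apply: ln_ge0; rewrite ?ler1n.
have cL_ge1 : 1 <= c * L by rewrite mulr_ege1.
have lglg_le : a * lg L <= b * ln (c * L).
  apply: le_trans (_ : lg L <= _); first by rewrite ler_piMl.
  rewrite /lg mulrC ler_pM2l // ler_ln ?posrE ?(lt_le_trans ltr01) //.
  by rewrite ler_peMl // (le_trans ler01).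
have exponent_ge : ln A <= powR (c * L) r - a * lg L + (ln A + (b / r) ^+ 2 / 2).
  by have := mul_ln_le_powR b r_gt0 cL_ge1; lra.
have k_le : k%:R <= k%:R ^+ d :> R.
  by rewrite -natrX ler_nat -{1}(expn1 k) leq_pexp2l // (leq_trans _ k_ge2).
apply: le_trans (_ : k%:R ^+ d * A <= _).
  by rewrite mulrC ler_wpM2r // ltW.
rewrite ler_wpM2l ?exprn_ge0 ?ler0n //.
by rewrite -{1}(lnK A_gt0) ler_expR.
Qed.

Lemma prod_lg_primes_ge1 (s : seq nat) :
  all prime s -> 1 <= \prod_(q <- s) lg (q%:R : R).
Proof.
elim: s => [|q s IH] /=; first by rewrite big_nil.
by case/andP=> q_pr s_pr; rewrite big_cons mulr_ege1 ?IH // lg_ge1 // ler_nat prime_gt1.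
Qed.

End Asymptotics.

Theorem theorem1p4 (R : realType) (p : nat) (ps : seq nat) :
  all prime (p :: ps) ->
  exists C : R, exists K0 : nat, forall k : nat, (K0 <= k)%N ->
    (Pr_half (Gamma p ps k))%:R
      <= k%:R ^+ size (p :: ps) *
         expR (powR ((size (p :: ps)).+1`!%:R
                       * (\prod_(q <- p :: ps) lg (q%:R : R)) / 2
                       * lg (k%:R : R))
                    ((size (p :: ps)).+1%:R)^-1
               - (size (p :: ps))%:R / (size (p :: ps)).+1%:R
                   * lg (lg (k%:R : R))
               + C).
Proof.
move=> primes; set d := size (p :: ps); set Q := \prod_(q <- p :: ps) q.
have c_ge1 : 1 <= d.+1`!%:R * \prod_(q <- p :: ps) lg (q%:R : R) / 2.
  rewrite ler_pdivlMr // mul1r -[2]mulr1 ler_pM ?prod_lg_primes_ge1 // ler_nat.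
  exact: leq_trans (fact_geq _).
have a_bounds : 0 <= (d%:R / d.+1%:R : R) <= 1.
  by rewrite divr_ge0 //= ler_pdivrMr ?ltr0n // mul1r ler_nat.
have r_gt0 : 0 < (d.+1%:R)^-1 :> R by rewrite invr_gt0.
have A_gt0 : 0 < (Q + 3)%:R :> R by rewrite ltr0n addn3.
have [C bound] := linear_le_exp_powR (ltn0Sn _ : (0 < d)%N) A_gt0 c_ge1 a_bounds r_gt0.
exists C, (maxn 2 (2 * (8 * Q + 16))) => k; rewrite geq_max => /andP[k_ge2 k_large].
apply: le_trans (bound k k_ge2); rewrite -natrM ler_nat.
apply: leq_trans (Pr_half_le (prob_good_Gamma primes k_large)) _.
by rewrite mulnDl leq_add2l leq_pmulr // ltnW.
Qed.
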